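(* Let $(\mathcal{H},\mathbf{a})$ be a weighted arrangement in $\mathbb{CP}^n$ with all $a_H>0$. The following are equivalent: (i) $\sum_{H\supset L}a_H<\operatorname{codim}L$ for every $L\in\mathcal{L}_{\mathrm{irr}}$; (ii) the same inequality holds for every $L\in\mathcal{L}$; (iii) the same inequality holds for every non-empty proper linear subspace $L\subsetneq\mathbb{CP}^n$.
   Context: $\mathcal{H}$ is a finite set of distinct hyperplanes in $\mathbb{CP}^n$; $\mathcal{L}$ is the set of non-empty proper intersections of members of $\mathcal{H}$. For $L\in\mathcal{L}$, the localization $\mathcal{H}_L=\{H\in\mathcal{H}:L\subset H\}$. A splitting of an arrangement $\mathcal{K}$ is a decomposition $\mathcal{K}=\mathcal{K}_1\cup\mathcal{K}_2$ whose centres (intersections of members; $\mathbb{CP}^n$ for the empty collection) $T_1,T_2$ satisfy $T_1+T_2=\mathbb{CP}^n$ (projective span); it is non-trivial if both parts are non-empty; $\mathcal{K}$ is irreducible if it has no non-trivial splitting. $L\in\mathcal{L}$ is irreducible if $\mathcal{H}_L$ is irreducible, and $\mathcal{L}_{\mathrm{irr}}$ is the set of irreducible elements of $\mathcal{L}$. *)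

(* Projective space CP^n is modelled by C^(n+1) = 'rV[R[i]]_(n.+1)
   with R : realType (so R[i] is the complex numbers); a projective linear subspace
   is a vector subspace, projective emptiness = the zero subspace. *)
From HB Require Import structures.
From mathcomp Require Import all_boot all_order all_algebra.
From mathcomp Require Import reals.
From mathcomp Require Import complex.
Set Implicit Arguments. Unset Strict Implicit. Unset Printing Implicit Defensive.
Import Order.TTheory GRing.Theory Num.Theory.
Local Open Scope ring_scope.

Section Arr.
Variables (R : realType) (n m : nat).
Notation C := (R[i])%C.
Notation V := 'rV[C]_(n.+1).

Definition is_hyperplane (H : {vspace V}) : Prop := \dim H = n.

(* codimension of a non-empty projective subspace L (L <> 0) *)
Definition codim (L : {vspace V}) : nat := (n.+1 - \dim L)%N.

(* centre of a collection of hyperplanes indexed by S (fullv for S empty) *)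
Definition centre (Hs : 'I_m -> {vspace V}) (S : {set 'I_m}) : {vspace V} :=
  (\bigcap_(i in S) Hs i)%VS.

Definition in_L (Hs : 'I_m -> {vspace V}) (L : {vspace V}) : Prop :=
  exists S : {set 'I_m}, S != set0 /\ L = centre Hs S /\ L != 0%VS /\ L != fullv.

Definition loc (Hs : 'I_m -> {vspace V}) (L : {vspace V}) : {set 'I_m} :=
  [set i | (L <= Hs i)%VS].

(* splitting of the sub-arrangement K: K = K1 u K2 (a decomposition),
   with T1 + T2 = CP^n (projective span = sum of vector subspaces) *)
Definition splitting (Hs : 'I_m -> {vspace V}) (K K1 K2 : {set 'I_m}) : Prop :=
  K1 :|: K2 = K /\ [disjoint K1 & K2] /\
  (centre Hs K1 + centre Hs K2)%VS = fullv.

Definition irreducible_arr (Hs : 'I_m -> {vspace V}) (K : {set 'I_m}) : Prop :=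
  ~ exists K1 K2, splitting Hs K K1 K2 /\ K1 != set0 /\ K2 != set0.

Definition in_Lirr (Hs : 'I_m -> {vspace V}) (L : {vspace V}) : Prop :=
  in_L Hs L /\ irreducible_arr Hs (loc Hs L).

Definition wsum (Hs : 'I_m -> {vspace V}) (a : 'I_m -> R) (L : {vspace V}) : R :=
  \sum_(i < m | (L <= Hs i)%VS) a i.

End Arr.

From HB Require Import structures.
From mathcomp Require Import all_boot all_order all_algebra.
From mathcomp Require Import reals.
From mathcomp Require Import complex.
From mathcomp Require Import zify.
From Stdlib Require Import Classical.
Set Implicit Arguments. Unset Strict Implicit. Unset Printing Implicit Defensive.
Import Order.TTheory GRing.Theory Num.Theory.
Local Open Scope ring_scope.

(* (i) => (ii) is an induction on codim L: a reducible L is the transversal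
   intersection T1 :&: T2 of the centres of a non-trivial splitting of H_L, so
   codim L = codim T1 + codim T2 with both summands positive, and the weights of
   H_L split into those of the two parts, each bounded by the weights of the
   hyperplanes through T1, resp. T2.  (ii) => (iii) replaces an arbitrary L by the
   intersection of all hyperplanes containing it, which carries the same weight
   and has at most the same codimension; if no hyperplane contains L the weighted
   sum is 0. *)

Lemma dim_rV_fullv (K : fieldType) (k : nat) :
  \dim (fullv : {vspace 'rV[K]_k}) = k.
Proof. by rewrite dimvf /dim /= mul1n. Qed.

Lemma dim_rV_leq (K : fieldType) (k : nat) (U : {vspace 'rV[K]_k}) :
  (\dim U <= k)%N.
Proof. by have := dimvS (subvf U); rewrite dim_rV_fullv. Qed.

Lemma rV_neq_fullv (K : fieldType) (k : nat) (U : {vspace 'rV[K]_k}) :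
  (U != fullv) = (\dim U < k)%N.
Proof. by rewrite eqEdim subvf dim_rV_fullv -ltnNge. Qed.

Section Arrangement.

Variables (R : realType) (n m : nat).
Variables (Hs : 'I_m -> {vspace 'rV[R[i]%C]_(n.+1)}) (a : 'I_m -> R).
Hypothesis Hs_hyperplane : forall j, is_hyperplane (Hs j).
Hypothesis a_gt0 : forall j, 0 < a j.

Implicit Types (L T : {vspace 'rV[R[i]%C]_(n.+1)}) (S K : {set 'I_m}).

Lemma codim_gt0 L : (0 < codim L)%N = (L != fullv).
Proof. by rewrite /codim subn_gt0 rV_neq_fullv. Qed.

Lemma codimS L T1 : (L <= T1)%VS -> (codim T1 <= codim L)%N.
Proof. by move=> /dimvS LT1; rewrite /codim leq_sub2l. Qed.

Lemma codim_capv T1 T2 :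
  (T1 + T2 = fullv)%VS -> codim (T1 :&: T2) = (codim T1 + codim T2)%N.
Proof.
move=> T12; have := dimv_sum_cap T1 T2; rewrite T12 dim_rV_fullv /codim.
have dimT1 : (\dim T1 <= n.+1)%N := dim_rV_leq T1.
have dimT2 : (\dim T2 <= n.+1)%N := dim_rV_leq T2.
lia.
Qed.

Lemma wsumE L : wsum Hs a L = \sum_(i in loc Hs L) a i.
Proof. by apply: eq_bigl => i; rewrite inE. Qed.

Lemma centre_subv S j : j \in S -> (centre Hs S <= Hs j)%VS.
Proof. by move=> jS; apply: bigcapv_inf jS _. Qed.

Lemma centre_setU K1 K2 :
  centre Hs (K1 :|: K2) = (centre Hs K1 :&: centre Hs K2)%VS.
Proof. by rewrite /centre big_setU //; apply: capvv. Qed.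

Lemma centre_neq_fullv S : S != set0 -> centre Hs S != fullv.
Proof.
case/set0Pn=> j /centre_subv /dimvS; rewrite (Hs_hyperplane j) => dimS.
by rewrite rV_neq_fullv ltnS.
Qed.

Lemma subv_centre_loc L : (L <= centre Hs (loc Hs L))%VS.
Proof. by apply/subv_bigcapP => i; rewrite inE. Qed.

Lemma loc_centre_loc L : loc Hs (centre Hs (loc Hs L)) = loc Hs L.
Proof.
apply/setP => i; rewrite !inE; apply/idP/idP => [|iL].
  exact/subv_trans/subv_centre_loc.
by apply: centre_subv; rewrite inE.
Qed.

Lemma centre_locK L : in_L Hs L -> centre Hs (loc Hs L) = L.
Proof.
case=> S [_ [-> _]]; apply/eqP; rewrite eqEsubv subv_centre_loc andbT.
by apply/subv_bigcapP => i iS; apply: centre_subv; rewrite inE centre_subv.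
Qed.

Lemma in_L_centre S L :
  S != set0 -> L != 0%VS -> (L <= centre Hs S)%VS -> in_L Hs (centre Hs S).
Proof.
move=> S0 L0 LS; exists S; split=> //; split=> //; split; last exact: centre_neq_fullv.
by apply: contraNneq L0 => S_0; rewrite -subv0 -S_0.
Qed.

Lemma sum_le_wsum_centre S : \sum_(i in S) a i <= wsum Hs a (centre Hs S).
Proof.
rewrite wsumE [leRHS]big_mkcond [leLHS]big_mkcond /=.
apply: ler_sum => i _; case: ifPn => [iS|_]; first by rewrite inE centre_subv.
by case: ifP => // _; apply: ltW.
Qed.

Lemma splitting_locE L K1 K2 :
  in_L Hs L -> splitting Hs (loc Hs L) K1 K2 ->
  L = (centre Hs K1 :&: centre Hs K2)%VS.
Proof. by move=> inL [K12 _]; rewrite -centre_setU K12 centre_locK. Qed.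

Lemma wsum_lt_codim_split L K1 K2 :
  in_L Hs L -> splitting Hs (loc Hs L) K1 K2 ->
  wsum Hs a (centre Hs K1) < (codim (centre Hs K1))%:R ->
  wsum Hs a (centre Hs K2) < (codim (centre Hs K2))%:R ->
  wsum Hs a L < (codim L)%:R.
Proof.
move=> inL splitL lt1 lt2; have eL := splitting_locE inL splitL.
have [K12 [dis sp]] := splitL.
rewrite wsumE -K12 (eq_bigl [predU K1 & K2]) => [|i]; last by rewrite !inE.
rewrite bigU // eL codim_capv // natrD.
exact: le_lt_trans (lerD (sum_le_wsum_centre K1) (sum_le_wsum_centre K2)) (ltrD lt1 lt2).
Qed.

Lemma wsum_lt_codim_from_irr :
  (forall L, in_Lirr Hs L -> wsum Hs a L < (codim L)%:R) ->
  forall L, in_L Hs L -> wsum Hs a L < (codim L)%:R.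
Proof.
move=> irr_lt L; have [k] := ubnP (codim L); elim: k L => // k IH L ltLk inL.
have [irrL|] := classic (irreducible_arr Hs (loc Hs L)); first exact: irr_lt.
move/NNPP=> [K1 [K2 [splitL [K1_0 K2_0]]]].
have eL := splitting_locE inL splitL.
have L0 : L != 0%VS by case: inL => S [_ [_ []]].
have codimL : codim L = (codim (centre Hs K1) + codim (centre Hs K2))%N.
  by case: splitL => _ [_ sp]; rewrite eL codim_capv.
have := centre_neq_fullv K1_0; have := centre_neq_fullv K2_0.
rewrite -!codim_gt0 => c2 c1.
apply: wsum_lt_codim_split splitL _ _ => //; apply: IH.
- by rewrite -ltnS (leq_trans _ ltLk) // codimL ltnS -addn1 leq_add2l.
- by apply: (in_L_centre _ L0); rewrite // eL capvSl.
- by rewrite -ltnS (leq_trans _ ltLk) // codimL ltnS -add1n leq_add2r.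
- by apply: (in_L_centre _ L0); rewrite // eL capvSr.
Qed.

Lemma wsum_lt_codim_from_L L :
  (forall L, in_L Hs L -> wsum Hs a L < (codim L)%:R) ->
  L != 0%VS -> L != fullv -> wsum Hs a L < (codim L)%:R.
Proof.
move=> L_lt L0 Lfull; have [locL0|locL] := eqVneq (loc Hs L) set0.
  by rewrite wsumE locL0 big_set0 ltr0n codim_gt0.
have LL' := subv_centre_loc L.
rewrite wsumE -loc_centre_loc -wsumE.
apply: lt_le_trans (L_lt _ (in_L_centre locL L0 LL')) _.
by rewrite ler_nat codimS.
Qed.

End Arrangement.

Unset Implicit Arguments.

Theorem lemma2p17 (R : realType) (n m : nat)
  (Hs : 'I_m -> {vspace 'rV[R[i]%C]_(n.+1)}) (a : 'I_m -> R) :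
  injective Hs ->
  (forall j, is_hyperplane (Hs j)) ->
  (forall j, 0 < a j) ->
  [/\ ((forall L, in_Lirr Hs L -> wsum Hs a L < (codim L)%:R) <->
       (forall L, in_L Hs L -> wsum Hs a L < (codim L)%:R)),
      ((forall L, in_L Hs L -> wsum Hs a L < (codim L)%:R) <->
       (forall L : {vspace 'rV[R[i]%C]_(n.+1)}, L != 0%VS -> L != fullv ->
          wsum Hs a L < (codim L)%:R)) &
      ((forall L, in_Lirr Hs L -> wsum Hs a L < (codim L)%:R) <->
       (forall L : {vspace 'rV[R[i]%C]_(n.+1)}, L != 0%VS -> L != fullv ->
          wsum Hs a L < (codim L)%:R))].
Proof.
move=> _ hyp a_gt0.
have i_ii := wsum_lt_codim_from_irr hyp a_gt0.
have ii_i : (forall L, in_L Hs L -> wsum Hs a L < (codim L)%:R) ->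
    forall L, in_Lirr Hs L -> wsum Hs a L < (codim L)%:R.
  by move=> lt L [inL _]; apply: lt.
have ii_iii := @wsum_lt_codim_from_L R n m Hs a.
have iii_ii : (forall L : {vspace 'rV[R[i]%C]_(n.+1)}, L != 0%VS -> L != fullv ->
    wsum Hs a L < (codim L)%:R) ->
    forall L, in_L Hs L -> wsum Hs a L < (codim L)%:R.
  by move=> lt L [S [_ [_ [L0 Lfull]]]]; apply: lt.
split; split=> [lt|lt].
- exact: i_ii.
- exact: ii_i.
- by move=> L; apply: ii_iii.
- exact: iii_ii.
- by move=> L; apply/ii_iii/i_ii.
- exact/ii_i/iii_ii.
Qed.
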